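(* Let $R$ be a commutative ring with identity and $M$ a non-zero comultiplication $R$-module such that $G'(M)$ is non-null. Then $G'(M)$ is an empty graph (has no edges) if and only if $\mathrm{Min}(M)=\{S_1,S_2\}$ with $S_1\neq S_2$ and both $M/S_1$ and $M/S_2$ are finitely cogenerated uniform $R$-modules.
   Context: An $R$-module $M$ is a comultiplication module if for every submodule $N$ of $M$ there is an ideal $I$ of $R$ with $N=\mathrm{Ann}_M(I)$. A submodule $N$ of $M$ is large if $N\cap L\neq 0$ for every non-zero submodule $L$ of $M$. $\mathrm{Min}(M)$ is the set of minimal submodules of $M$. The large sum graph $G'(M)$ has as vertex set the set of all non-zero non-large submodules of $M$, and two distinct vertices $N,K$ are adjacent iff $N+K$ is non-large in $M$. A module is uniform if any two non-zero submodules have non-zero intersection; a module $X$ is finitely cogenerated if whenever a family of submodules of $X$ has zero intersection, some finite subfamily has zero intersection. *)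

From HB Require Import structures.
From mathcomp Require Import all_boot all_order all_algebra.
From Stdlib Require List.
Set Implicit Arguments. Unset Strict Implicit. Unset Printing Implicit Defensive.
Import GRing.Theory.
Local Open Scope ring_scope.

Section ModDefs.
Variable R : comNzRingType.

Definition same_set (T : Type) (A B : T -> Prop) : Prop := forall x, A x <-> B x.

Definition is_ideal (I : R -> Prop) : Prop :=
  [/\ I 0, (forall a b, I a -> I b -> I (a + b)) & (forall r a, I a -> I (r * a))].

Variable M : lmodType R.

Definition is_submod (N : M -> Prop) : Prop :=
  [/\ N 0, (forall x y, N x -> N y -> N (x + y)) & (forall (r : R) x, N x -> N (r *: x))].

Definition AnnM (I : R -> Prop) : M -> Prop := fun m => forall r, I r -> r *: m = 0.

Definition comultiplication_module : Prop :=
  forall N, is_submod N -> exists I, is_ideal I /\ same_set N (AnnM I).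

Definition nonzero_submod (N : M -> Prop) : Prop := exists x, N x /\ x <> 0.

Definition module_nonzero : Prop := exists x : M, x <> 0.

Definition large (N : M -> Prop) : Prop :=
  forall L, is_submod L -> nonzero_submod L -> exists x, [/\ N x, L x & x <> 0].

Definition sum_submod (N K : M -> Prop) : M -> Prop :=
  fun x => exists a b, [/\ N a, K b & x = a + b].

(* vertices of the large sum graph G'(M) *)
Definition lsg_vertex (N : M -> Prop) : Prop :=
  [/\ is_submod N, nonzero_submod N & ~ large N].

Definition lsg_adj (N K : M -> Prop) : Prop :=
  [/\ lsg_vertex N, lsg_vertex K, ~ same_set N K & ~ large (sum_submod N K)].

Definition lsg_nonnull : Prop := exists N, lsg_vertex N.

Definition lsg_empty : Prop := forall N K, ~ lsg_adj N K.

Definition minimal_submod (S : M -> Prop) : Prop :=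
  [/\ is_submod S, nonzero_submod S &
     forall L, is_submod L -> nonzero_submod L -> (forall x, L x -> S x) -> same_set L S].

Definition Min_is_pair (S1 S2 : M -> Prop) : Prop :=
  [/\ minimal_submod S1, minimal_submod S2, ~ same_set S1 S2 &
     forall S, minimal_submod S -> same_set S S1 \/ same_set S S2].

End ModDefs.

Section ModProps.
Variable R : comNzRingType.
Variable X : lmodType R.

Definition uniform_module : Prop :=
  forall N K : X -> Prop, is_submod N -> is_submod K ->
    nonzero_submod N -> nonzero_submod K -> exists x, [/\ N x, K x & x <> 0].

Definition fin_cogenerated : Prop :=
  forall (I : Type) (F : I -> X -> Prop), (forall i, is_submod (F i)) ->
    (forall x, (forall i, F i x) -> x = 0) ->
    exists s : list I, forall x, (forall i, List.In i s -> F i x) -> x = 0.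
End ModProps.

(* The quotient M/S is (up to isomorphism) a finitely cogenerated uniform module:
   there is a surjective R-linear map from M onto such a module with kernel S. *)
Definition quotient_fcg_uniform (R : comNzRingType) (M : lmodType R) (S : M -> Prop) : Prop :=
  exists (X : lmodType R) (f : {linear M -> X}),
    [/\ (forall y, exists x, f x = y), (forall x, S x <-> f x = 0),
        uniform_module X & fin_cogenerated X].

From HB Require Import structures.
From mathcomp Require Import all_boot all_order all_algebra.
From Stdlib Require Import Classical ClassicalEpsilon FunctionalExtensionality PropExtensionality.
Set Implicit Arguments. Unset Strict Implicit. Unset Printing Implicit Defensive.
Import GRing.Theory.
Local Open Scope ring_scope.

(* Two facts drive both directions. In a comultiplication module, if [b + c ∈ N] with [b ∈ S1],
   [c ∈ S2] and [S1 ∩ S2 = 0], then [b, c ∈ N]. And if [M/S] is uniform, a non-large submodule containing [S] must equal [S].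
   When [G'(M)] has no edges, every vertex is minimal; a vertex [N] and a complement [L] of it are
   two minimal submodules with [N ⊕ L] large, and splitting shows they are the only ones. For a
   quotient [M/S] by one of them, the preimage of a nonzero submodule is a large submodule, so it
   contains the other minimal submodule, whose image is then a nonzero element lying in every
   nonzero submodule of [M/S]; this makes [M/S] uniform and finitely cogenerated.
   Conversely, uniformity of [M/S1] makes [S1 ⊕ S2] large, so every vertex contains [S1] or [S2],
   hence equals it; a sum [N + K] of adjacent vertices would be such a vertex, forcing [N = K]. *)

Section SubmoduleTheory.
Variables (R : comNzRingType) (M : lmodType R).
Implicit Types (S N K V : M -> Prop).

Lemma submod0 S : is_submod S -> S 0. Proof. by case. Qed.

Lemma submodD S x y : is_submod S -> S x -> S y -> S (x + y).
Proof. by case=> _ + _; apply. Qed.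

Lemma submodZ S r x : is_submod S -> S x -> S (r *: x).
Proof. by case=> _ _; apply. Qed.

Lemma submodN S x : is_submod S -> S x -> S (- x).
Proof. by move=> hS Sx; rewrite -scaleN1r; apply: submodZ. Qed.

Lemma submodB S x y : is_submod S -> S x -> S y -> S (x - y).
Proof. by move=> hS Sx Sy; apply: submodD => //; apply: submodN. Qed.

Lemma submodI N K : is_submod N -> is_submod K -> is_submod (fun x => N x /\ K x).
Proof.
move=> hN hK; split; first by split; apply: submod0.
  by move=> x y [? ?] [? ?]; split; apply: submodD.
by move=> r x [? ?]; split; apply: submodZ.
Qed.

Lemma submod_sum N K : is_submod N -> is_submod K -> is_submod (sum_submod N K).
Proof.
move=> hN hK; split.
- by exists 0, 0; rewrite addr0; split=> //; apply: submod0.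
- move=> _ _ [a [b [Na Kb ->]]] [c [d [Nc Kd ->]]].
  by exists (a + c), (b + d); rewrite addrACA; split=> //; apply: submodD.
- move=> r _ [a [b [Na Kb ->]]].
  by exists (r *: a), (r *: b); rewrite scalerDr; split=> //; apply: submodZ.
Qed.

Lemma sum_submodl N K x : is_submod K -> N x -> sum_submod N K x.
Proof. by move=> hK Nx; exists x, 0; rewrite addr0; split => //; apply: submod0. Qed.

Lemma sum_submodr N K x : is_submod N -> K x -> sum_submod N K x.
Proof. by move=> hN Kx; exists 0, x; rewrite add0r; split => //; apply: submod0. Qed.

Lemma largeS N K : large N -> (forall x, N x -> K x) -> large K.
Proof. by move=> lN NK L hL /(lN L hL) [x [Nx Lx nx]]; exists x; split; auto. Qed.

Lemma not_largeP N : ~ large N ->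
  exists L, [/\ is_submod L, nonzero_submod L & forall x, N x -> L x -> x = 0].
Proof.
move=> nlN; apply: NNPP => noL; apply: nlN => L hL nzL.
apply: NNPP => noX; apply: noL; exists L; split => // x Nx Lx.
by apply: NNPP => nx; apply: noX; exists x.
Qed.

Lemma minimal_submod_sub S V x : minimal_submod S -> is_submod V ->
  V x -> S x -> x <> 0 -> forall y, S y -> V y.
Proof.
case=> hS _ minS hV Vx Sx nx y Sy.
have nzVS : nonzero_submod (fun z => V z /\ S z) by exists x.
have eVS := minS _ (submodI hV hS) nzVS (fun z (VSz : V z /\ S z) => proj2 VSz).
by case: (eVS y) => _ /(_ Sy) [].
Qed.

Lemma minimal_submod_same S1 S2 x : minimal_submod S1 -> minimal_submod S2 ->
  S1 x -> S2 x -> x <> 0 -> same_set S1 S2.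
Proof.
move=> m1 m2 S1x S2x nx y; split.
  by apply: (minimal_submod_sub m1 _ S2x S1x nx); case: m2.
by apply: (minimal_submod_sub m2 _ S1x S2x nx); case: m1.
Qed.

Lemma minimal_submod_disjoint S1 S2 : minimal_submod S1 -> minimal_submod S2 ->
  ~ same_set S1 S2 -> forall x, S1 x -> S2 x -> x = 0.
Proof.
move=> m1 m2 ns x S1x S2x; apply: NNPP => nx.
exact/ns/(minimal_submod_same m1 m2 S1x S2x nx).
Qed.

End SubmoduleTheory.

Section ComultiplicationAndUniform.
Variables (R : comNzRingType) (M : lmodType R).
Implicit Types (S N K V : M -> Prop).

(* Writing [N = Ann_M(I)], each [r] in [I] gives [r b = - r c], which lies in [S1 ∩ S2 = 0]. *)
Lemma comult_submod_summandl N S1 S2 b c : comultiplication_module M ->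
  is_submod N -> is_submod S1 -> is_submod S2 ->
  (forall x, S1 x -> S2 x -> x = 0) -> S1 b -> S2 c -> N (b + c) -> N b.
Proof.
move=> hc hN h1 h2 disj S1b S2c Nbc.
have [I [_ eNI]] := hc N hN.
apply/eNI => r Ir; have := proj1 (eNI _) Nbc r Ir.
rewrite scalerDr => /eqP; rewrite addr_eq0 => /eqP rbE.
apply: disj; first exact: submodZ.
by rewrite rbE; apply: submodN => //; apply: submodZ.
Qed.

Lemma large_sum_meets_summand S1 S2 V : comultiplication_module M ->
  is_submod S1 -> is_submod S2 -> (forall x, S1 x -> S2 x -> x = 0) ->
  large (sum_submod S1 S2) -> is_submod V -> nonzero_submod V ->
  exists x, [/\ V x, x <> 0 & S1 x \/ S2 x].
Proof.
move=> hc h1 h2 disj lS hV nzV.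
have [_ [[b [c [S1b S2c ->]]] Vbc nbc]] := lS V hV nzV.
have Vb := comult_submod_summandl hc hV h1 h2 disj S1b S2c Vbc.
have Vc : V c.
  apply: (comult_submod_summandl hc hV h2 h1 _ S2c S1b); last by rewrite addrC.
  by move=> x S2x S1x; apply: disj.
have [b0|nb] := classic (b = 0); last by exists b; split; auto.
exists c; split=> //; last by right.
by move=> c0; apply: nbc; rewrite b0 c0 addr0.
Qed.

Lemma image_submod (X : lmodType R) (f : {linear M -> X}) S :
  is_submod S -> is_submod (fun y => exists x, S x /\ f x = y).
Proof.
move=> hS; split.
- by exists 0; rewrite raddf0; split => //; apply: submod0.
- move=> _ _ [x [Sx <-]] [y [Sy <-]].
  by exists (x + y); rewrite raddfD; split => //; apply: submodD.
- by move=> r _ [x [Sx <-]]; exists (r *: x); rewrite linearZ; split => //; apply: submodZ.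
Qed.

Lemma preim_submod (X : lmodType R) (f : {linear M -> X}) (K : X -> Prop) :
  is_submod K -> is_submod (fun x => K (f x)).
Proof.
move=> hK; split.
- by rewrite raddf0; apply: submod0.
- by move=> x y Kx Ky; rewrite raddfD; apply: submodD.
- by move=> r x Kx; rewrite linearZ; apply: submodZ.
Qed.

Lemma uniform_image_meet (X : lmodType R) (f : {linear M -> X}) N K :
  uniform_module X -> is_submod N -> is_submod K ->
  (exists x, N x /\ f x <> 0) -> (exists y, K y /\ f y <> 0) ->
  exists x y, [/\ N x, K y, f x = f y & f x <> 0].
Proof.
move=> uX hN hK [x [Nx fx]] [y [Ky fy]].
have [_ [[a [Na <-]] [b [Kb fab]] nfa]] :=
  uX _ _ (image_submod f hN) (image_submod f hK)
     (ex_intro _ (f x) (conj (ex_intro _ x (conj Nx erefl)) fx))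
     (ex_intro _ (f y) (conj (ex_intro _ y (conj Ky erefl)) fy)).
by exists a, b; split.
Qed.

(* Uniformity of [X] gives [a ∈ V] and nonzero [l] in a complement [L] of [V]
   with [a - l ∈ S ⊆ V], so [l ∈ V ∩ L = 0]. *)
Lemma non_large_superset_kernel (X : lmodType R) (f : {linear M -> X}) S V :
  (forall x, S x <-> f x = 0) -> uniform_module X ->
  is_submod V -> ~ large V -> (forall x, S x -> V x) -> same_set V S.
Proof.
move=> kerS uX hV nlV SV x; split; last exact: SV.
move=> Vx; apply: NNPP => nSx.
have [L [hL [l0 [Ll0 nl0]] disjVL]] := not_largeP nlV.
have fl0 : f l0 <> 0 by move=> /kerS /SV Vl0; exact/nl0/disjVL.
have fx : f x <> 0 by move=> /kerS.
have [a [l [Va Ll fal nfa]]] := uniform_image_meet uX hV hL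
  (ex_intro _ x (conj Vx fx)) (ex_intro _ l0 (conj Ll0 fl0)).
have Sal : S (a - l) by apply/kerS; rewrite linearB /= fal subrr.
have Vl : V l by rewrite -[l](subKr a); apply: submodB => //; apply: SV.
by apply: nfa; rewrite fal (disjVL l Vl Ll) raddf0.
Qed.

Lemma uniform_quotient_large_sum (X : lmodType R) (f : {linear M -> X}) S1 S2 :
  (forall x, S1 x <-> f x = 0) -> uniform_module X ->
  is_submod S1 -> is_submod S2 -> nonzero_submod S2 ->
  (forall x, S1 x -> S2 x -> x = 0) -> large (sum_submod S1 S2).
Proof.
move=> kerS1 uX hS1 hS2 [s [S2s ns]] disj L hL [l0 [Ll0 nl0]].
have [[l [Ll fl]] | LS1] := classic (exists l, L l /\ f l <> 0); last first.
  exists l0; split=> //; apply: sum_submodl hS2 _; apply/kerS1.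
  by apply: NNPP => fl0; apply: LS1; exists l0.
have fs : f s <> 0 by move=> /kerS1 S1s; exact: ns (disj _ S1s S2s).
have [a [b [La S2b fab nfa]]] := uniform_image_meet uX hL hS2
  (ex_intro _ l (conj Ll fl)) (ex_intro _ s (conj S2s fs)).
exists a; split=> //; last by move=> a0; apply: nfa; rewrite a0 raddf0.
exists (a - b), b; split=> //; last by rewrite subrK.
by apply/kerS1; rewrite linearB /= fab subrr.
Qed.

End ComultiplicationAndUniform.

Section QuotientModule.
Variables (R : comNzRingType) (M : lmodType R) (S : M -> Prop).
Hypothesis hS : is_submod S.

(* [M/S] is carved out of [M] by choosing a representative of each coset with [epsilon];
   by extensionality the choice only depends on the coset. *)
Definition coset_rep (x : M) : M := epsilon (inhabits 0) (fun y => S (x - y)).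

Lemma coset_repP x : S (x - coset_rep x).
Proof.
apply: (epsilon_spec (inhabits 0) (fun y => S (x - y))).
by exists x; rewrite subrr; apply: submod0.
Qed.

Lemma coset_rep_eq x y : S (x - y) -> coset_rep x = coset_rep y.
Proof.
move=> Sxy; rewrite /coset_rep; congr epsilon.
apply: functional_extensionality => z; apply: propositional_extensionality.
split=> Sz.
  by have := submodB hS Sz Sxy; rewrite opprB addrC addrA subrK.
by have := submodD hS Sxy Sz; rewrite addrA subrK.
Qed.

Lemma coset_repK x : coset_rep (coset_rep x) = coset_rep x.
Proof. by apply: coset_rep_eq; rewrite -opprB; apply: submodN => //; apply: coset_repP. Qed.

Definition quot := {x : M | coset_rep x == x}.
HB.instance Definition _ := Choice.on quot.

Definition qproj (x : M) : quot := exist _ (coset_rep x) (introT eqP (coset_repK x)).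

Lemma qprojK (a : quot) : qproj (val a) = a.
Proof. by apply: val_inj => /=; apply/eqP; exact: (valP a). Qed.

Lemma qprojP (a : quot) : exists x, a = qproj x.
Proof. by exists (val a); rewrite qprojK. Qed.

Lemma qproj_eq x y : qproj x = qproj y <-> S (x - y).
Proof.
split=> [/(congr1 val) /= eq_rep | Sxy]; last exact/val_inj/coset_rep_eq.
have -> : x - y = (x - coset_rep x) - (y - coset_rep y) by rewrite eq_rep opprB addrA subrK.
by apply: submodB => //; apply: coset_repP.
Qed.

Definition qadd (a b : quot) := qproj (val a + val b).
Definition qopp (a : quot) := qproj (- val a).
Definition qscale (r : R) (a : quot) := qproj (r *: val a).

Lemma qadd_proj x y : qadd (qproj x) (qproj y) = qproj (x + y).
Proof.
apply/qproj_eq => /=.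
have -> : coset_rep x + coset_rep y - (x + y) = - ((x - coset_rep x) + (y - coset_rep y)).
  by rewrite [RHS]opprD !opprB opprD addrACA.
by apply: submodN => //; apply: submodD => //; apply: coset_repP.
Qed.

Lemma qopp_proj x : qopp (qproj x) = qproj (- x).
Proof. by apply/qproj_eq => /=; rewrite opprK addrC; apply: coset_repP. Qed.

Lemma qscale_proj r x : qscale r (qproj x) = qproj (r *: x).
Proof.
apply/qproj_eq => /=; rewrite -scalerBr -opprB scalerN.
by apply: submodN => //; apply: submodZ => //; apply: coset_repP.
Qed.

Lemma qaddA : associative qadd.
Proof.
move=> a b c; case: (qprojP a) (qprojP b) (qprojP c) => x -> [y ->] [z ->].
by rewrite !qadd_proj addrA.
Qed.

Lemma qaddC : commutative qadd.
Proof. by move=> a b; case: (qprojP a) (qprojP b) => x -> [y ->]; rewrite !qadd_proj addrC. Qed.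

Lemma qadd0 : left_id (qproj 0) qadd.
Proof. by move=> a; case: (qprojP a) => x ->; rewrite qadd_proj add0r. Qed.

Lemma qaddN : left_inverse (qproj 0) qopp qadd.
Proof. by move=> a; case: (qprojP a) => x ->; rewrite qopp_proj qadd_proj addNr. Qed.

HB.instance Definition _ := GRing.isZmodule.Build quot qaddA qaddC qadd0 qaddN.

Lemma qprojD x y : qproj x + qproj y = qproj (x + y).
Proof. exact: qadd_proj. Qed.

Lemma qscaleA r s a : qscale r (qscale s a) = qscale (r * s) a.
Proof. by case: (qprojP a) => x ->; rewrite !qscale_proj scalerA. Qed.

Lemma qscale1 : left_id 1 qscale.
Proof. by move=> a; case: (qprojP a) => x ->; rewrite qscale_proj scale1r. Qed.

Lemma qscaleDr : right_distributive qscale +%R.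
Proof.
move=> r a b; case: (qprojP a) (qprojP b) => x -> [y ->].
by rewrite qprojD !qscale_proj qprojD scalerDr.
Qed.

Lemma qscaleDl a : {morph qscale^~ a : r s / r + s}.
Proof. by move=> r s; case: (qprojP a) => x ->; rewrite !qscale_proj qprojD scalerDl. Qed.

HB.instance Definition _ := GRing.Zmodule_isLmodule.Build R quot qscaleA qscale1 qscaleDr qscaleDl.

Lemma qproj_linear : linear qproj.
Proof. by move=> r x y; rewrite -[r *: qproj x]/(qscale r (qproj x)) qscale_proj qprojD. Qed.

HB.instance Definition _ := GRing.isLinear.Build R M quot *:%R qproj qproj_linear.

Lemma quotient_module_exists : exists (X : lmodType R) (f : {linear M -> X}),
  (forall y, exists x, f x = y) /\ (forall x, S x <-> f x = 0).
Proof.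
exists quot, qproj; split=> [a | x]; first by case: (qprojP a) => x ->; exists x.
by rewrite -[0 : quot]/(qproj 0) qproj_eq subr0.
Qed.

End QuotientModule.

Lemma core_uniform_fin_cogenerated (R : comNzRingType) (X : lmodType R) (y0 : X) :
  y0 <> 0 -> (forall K, is_submod K -> nonzero_submod K -> K y0) ->
  uniform_module X /\ fin_cogenerated X.
Proof.
move=> ny0 core; split=> [N K hN hK nzN nzK | I F hF capF].
  by exists y0; split=> //; apply: core.
have [[i trivFi] | allFi] := classic (exists i, forall x, F i x -> x = 0).
  by exists [:: i] => x /(_ i (or_introl erefl)); apply: trivFi.
exfalso; apply/ny0/capF => i; apply: core => //.
apply: NNPP => zFi; apply: allFi; exists i => x Fx.
by apply: NNPP => nx; apply: zFi; exists x.
Qed.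

Section EmptyLargeSumGraph.
Variables (R : comNzRingType) (M : lmodType R).
Implicit Types (N V : M -> Prop).
Hypothesis emp : lsg_empty M.

Lemma lsg_empty_vertex_minimal V : lsg_vertex V -> minimal_submod V.
Proof.
case=> hV nzV nlV; split=> // L hL nzL LV.
apply: NNPP => nLV; apply: (@emp L V); split=> //.
- by split=> // lL; apply/nlV/(largeS lL).
- by move=> lLV; apply/nlV/(largeS lLV) => _ [a [b [La Vb ->]]]; apply: submodD; auto.
Qed.

Lemma lsg_empty_complement N : lsg_vertex N ->
  exists L, [/\ minimal_submod L, (forall x, N x -> L x -> x = 0) & large (sum_submod N L)].
Proof.
move=> vN; have [hN [n [Nn nn]] nlN] := vN.
have [L [hL nzL disjNL]] := not_largeP nlN.
have vL : lsg_vertex L.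
  split=> // lL; have [x [Lx Nx nx]] := lL N hN (ex_intro _ n (conj Nn nn)).
  exact/nx/disjNL.
exists L; split=> //; first exact: lsg_empty_vertex_minimal.
apply: NNPP => nlNL; apply: (@emp N L); split=> // eNL.
by apply/nn/disjNL => //; apply/eNL.
Qed.

(* The preimage of a nonzero submodule of [X] properly contains [Sa]; it cannot be a vertex,
   since vertices are minimal, so it is large and thus contains [Sb]. *)
Lemma lsg_empty_quotient_core (Sa Sb : M -> Prop) (X : lmodType R) (f : {linear M -> X}) sb :
  minimal_submod Sa -> minimal_submod Sb -> (forall x, Sa x -> Sb x -> x = 0) ->
  (forall y, exists x, f x = y) -> (forall x, Sa x <-> f x = 0) -> Sb sb -> sb <> 0 ->
  forall K : X -> Prop, is_submod K -> nonzero_submod K -> K (f sb).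
Proof.
move=> [hSa [sa [Ssa nsa]] _] mb disj surj kerSa Ssb nsb K hK [y [Ky ny]].
have [x fxy] := surj y; move: Ky ny; rewrite -fxy => Kfx nfx.
have hG := preim_submod f hK.
have SaG z : Sa z -> K (f z) by move=> /kerSa ->; apply: submod0.
have lG : large (fun z => K (f z)).
  apply: NNPP => nlG.
  have vG : lsg_vertex (fun z => K (f z)) by split=> //; exists sa; split=> //; apply: SaG.
  have [_ _ minG] := lsg_empty_vertex_minimal vG.
  have eSaG := minG Sa hSa (ex_intro _ sa (conj Ssa nsa)) SaG.
  by apply/nfx/kerSa/eSaG.
have [hSb _ _] := mb.
have [z [Kfz Sbz nz]] := lG Sb hSb (ex_intro _ sb (conj Ssb nsb)).
exact: (minimal_submod_sub mb hG Kfz Sbz nz).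
Qed.

Lemma lsg_empty_quotient (Sa Sb : M -> Prop) : minimal_submod Sa -> minimal_submod Sb ->
  (forall x, Sa x -> Sb x -> x = 0) -> quotient_fcg_uniform Sa.
Proof.
move=> ma mb disj; have [hSa _ _] := ma; have [_ [sb [Ssb nsb]] _] := mb.
have [X [f [surj kerSa]]] := quotient_module_exists hSa.
have [uX fX] : uniform_module X /\ fin_cogenerated X.
  apply: (core_uniform_fin_cogenerated (y0 := f sb)).
    by move=> /kerSa Sasb; exact: nsb (disj _ Sasb Ssb).
  exact: (lsg_empty_quotient_core ma mb disj surj kerSa).
by exists X, f.
Qed.

End EmptyLargeSumGraph.

Section MinimalPair.
Variables (R : comNzRingType) (M : lmodType R) (S1 S2 : M -> Prop).
Hypotheses (hc : comultiplication_module M)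
  (m1 : minimal_submod S1) (m2 : minimal_submod S2)
  (disj : forall x, S1 x -> S2 x -> x = 0) (lS : large (sum_submod S1 S2)).

Let hS1 : is_submod S1. Proof. by case: m1. Qed.
Let hS2 : is_submod S2. Proof. by case: m2. Qed.

Lemma large_sum_Min_is_pair : Min_is_pair S1 S2.
Proof.
split=> // [e12 | S mS].
  have [_ [x [S1x nx]] _] := m1; exact/nx/disj/e12.
have [hS nzS _] := mS.
have [x [Sx nx [S1x | S2x]]] := large_sum_meets_summand hc hS1 hS2 disj lS hS nzS.
  by left; apply: (minimal_submod_same mS m1 Sx S1x nx).
by right; apply: (minimal_submod_same mS m2 Sx S2x nx).
Qed.

Lemma large_sum_vertex_contains (V : M -> Prop) : is_submod V -> nonzero_submod V ->
  (forall x, S1 x -> V x) \/ (forall x, S2 x -> V x).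
Proof.
move=> hV nzV.
have [x [Vx nx [S1x | S2x]]] := large_sum_meets_summand hc hS1 hS2 disj lS hV nzV.
  by left; apply: (minimal_submod_sub m1 hV Vx S1x nx).
by right; apply: (minimal_submod_sub m2 hV Vx S2x nx).
Qed.

End MinimalPair.

Lemma uniform_quotients_lsg_empty (R : comNzRingType) (M : lmodType R) (S1 S2 : M -> Prop)
    (X1 X2 : lmodType R) (f1 : {linear M -> X1}) (f2 : {linear M -> X2}) :
  comultiplication_module M -> minimal_submod S1 -> minimal_submod S2 -> ~ same_set S1 S2 ->
  (forall x, S1 x <-> f1 x = 0) -> uniform_module X1 ->
  (forall x, S2 x <-> f2 x = 0) -> uniform_module X2 -> lsg_empty M.
Proof.
move=> hc m1 m2 ns kerS1 u1 kerS2 u2 N K [[hN nzN _] [hK nzK _] nNK nlNK].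
have [[hS1 _ _] [hS2 nzS2 _]] := (m1, m2).
have disj := minimal_submod_disjoint m1 m2 ns.
have lS := uniform_quotient_large_sum kerS1 u1 hS1 hS2 nzS2 disj.
have hNK := submod_sum hN hK.
have nzNK : nonzero_submod (sum_submod N K).
  by case: nzN => x [Nx nx]; exists x; split=> //; apply: sum_submodl.
have [S [[_ _ minS] eNKS]] : exists S, minimal_submod S /\ same_set (sum_submod N K) S.
  case: (large_sum_vertex_contains hc m1 m2 disj lS hNK nzNK) => sub.
    by exists S1; split=> //; apply: (non_large_superset_kernel kerS1 u1).
  by exists S2; split=> //; apply: (non_large_superset_kernel kerS2 u2).
apply: nNK => y.
rewrite (minS N hN nzN (fun z Nz => proj1 (eNKS z) (sum_submodl hK Nz))).
by rewrite (minS K hK nzK (fun z Kz => proj1 (eNKS z) (sum_submodr hN Kz))).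
Qed.

Theorem theorem2p5 (R : comNzRingType) (M : lmodType R) :
  module_nonzero M -> comultiplication_module M -> lsg_nonnull M ->
  (lsg_empty M <->
   exists S1 S2 : M -> Prop,
     [/\ Min_is_pair S1 S2, quotient_fcg_uniform S1 & quotient_fcg_uniform S2]).
Proof.
move=> _ hc [N vN]; split=> [emp | [S1 [S2 [[m1 m2 ns _] qS1 qS2]]]].
  have [L [mL disjNL lNL]] := lsg_empty_complement emp vN.
  have mN := lsg_empty_vertex_minimal emp vN.
  have disjLN x : L x -> N x -> x = 0 by move=> Lx Nx; apply: disjNL.
  exists N, L; split.
  - exact: large_sum_Min_is_pair hc mN mL disjNL lNL.
  - exact: (lsg_empty_quotient emp mN mL disjNL).
  - exact: (lsg_empty_quotient emp mL mN disjLN).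
have [X1 [f1 [_ kerS1 u1 _]]] := qS1.
have [X2 [f2 [_ kerS2 u2 _]]] := qS2.
exact: uniform_quotients_lsg_empty hc m1 m2 ns kerS1 u1 kerS2 u2.
Qed.
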